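(* Let $L\in\mathbb N$ satisfy $\operatorname{rank}\mathcal O_L(\Sigma_s)=n$. Then for any input signal $u$ and any $x(0)$, the IOH $v$ and output $y$ of $\Sigma_s$ satisfy $v(t+1)=\Theta v(t)+\Pi u(t)$ and $y(t)=C\Gamma v(t)$ for all $t\ge L$. Further, $v(t)\in\mathscr P:=\mathrm{im}[\Theta^{L(m+r)-1}\Pi,\dots,\Theta\Pi,\Pi]$ for all $t\ge L$, and $\dim\mathscr P=Lm+n$.
   Context: System $\Sigma_s$: $x(t+1)=Ax(t)+Bu(t)$, $y(t)=Cx(t)$, $t\ge0$, $x\in\mathbb R^n,u\in\mathbb R^m,y\in\mathbb R^r$; standing assumptions: $(A,B,C)$ is a minimal realization and $A$ is Schur. $\mathcal R_L(\Sigma_s)=[A^{L-1}B,\dots,AB,B]$, $\mathcal O_L(\Sigma_s)=[C^\top,(CA)^\top,\dots,(CA^{L-1})^\top]^\top$, and $\mathcal H_L(\Sigma_s)$ is the $Lr\times Lm$ block lower-triangular Toeplitz matrix with $(i,j)$ block $H_{i-j}$ for $j\le i$, where $H_0=0$, $H_k=CA^{k-1}B$. The $L$-length input–output history (IOH) is $v(t)=[u(t-L)^\top,\dots,u(t-1)^\top,y(t-L)^\top,\dots,y(t-1)^\top]^\top\in\mathbb R^{L(m+r)}$, $t\ge L$. $\Gamma=[\mathcal R_L-A^L\mathcal O_L^\dagger\mathcal H_L,\ A^L\mathcal O_L^\dagger]$ ($\dagger$: Moore–Penrose inverse). $\Theta=\mathrm{diag}(S_m,S_r)+EC\Gamma$,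 where $S_k$ is the $Lk\times Lk$ block matrix with $I_k$ in blocks $(i,i+1)$, $i=1,\dots,L-1$, zeros elsewhere, and $E\in\mathbb R^{L(m+r)\times r}$ has $I_r$ in its last $r$ rows and zeros elsewhere. $\Pi\in\mathbb R^{L(m+r)\times m}$ has $I_m$ in rows $(L-1)m+1,\dots,Lm$ and zeros elsewhere. *)

(* Scalars: an arbitrary real closed field R (covers the reals). *)
From HB Require Import structures.
From mathcomp Require Import all_boot all_order all_algebra.
From mathcomp Require Import complex.
Set Implicit Arguments. Unset Strict Implicit. Unset Printing Implicit Defensive.
Import Order.TTheory GRing.Theory Num.Theory.
Local Open Scope ring_scope.

Section Defs.
Variable R : rcfType.

(* Block row [F 0, F 1, ..., F (L-1)] of p x q blocks : 'M_(p, L*q). *)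
Definition blk_row (L p q : nat) (F : 'I_L -> 'M[R]_(p, q)) : 'M[R]_(p, L * q) :=
  \matrix_(i < p) mxvec (\matrix_(j < L, c < q) F j i c).
Definition blk_col (L p q : nat) (F : 'I_L -> 'M[R]_(p, q)) : 'M[R]_(L * p, q) :=
  (blk_row (fun j => (F j)^T))^T.
(* L x L block matrix with (i,j) block F i j (0-indexed). *)
Definition blk_mx (L p q : nat) (F : 'I_L -> 'I_L -> 'M[R]_(p, q)) : 'M[R]_(L * p, L * q) :=
  blk_col (fun i => blk_row (F i)).

(* Moore-Penrose inverse via a full-rank factorization A = F G
   (F = col_base A full column rank, G = row_base A full row rank):
   A^+ = G^T (G G^T)^{-1} (F^T F)^{-1} F^T. *)
Definition mp_inv (p q : nat) (M : 'M[R]_(p, q)) : 'M[R]_(q, p) :=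
  let F := col_base M in let G := row_base M in
  G^T *m invmx (G *m G^T) *m invmx (F^T *m F) *m F^T.

Variables (n m r : nat) (A : 'M[R]_n) (B : 'M[R]_(n, m)) (C : 'M[R]_(r, n)).

(* Minimal realization: no realization (A',B',C') of the same transfer
   function (equivalently, same Markov parameters C A^k B, k >= 0) has
   a smaller state dimension. *)
Definition minimal_realization : Prop :=
  forall n' (A' : 'M[R]_n') (B' : 'M[R]_(n', m)) (C' : 'M[R]_(r, n')),
    (forall k, C' *m A' ^+ k *m B' = C *m A ^+ k *m B) -> (n <= n')%N.

(* Schur: every (complex) eigenvalue of A has modulus < 1. *)
Definition schur_stable : Prop :=
  forall z : R[i], root (map_poly (fun a : R => Complex a 0) (char_poly A)) z ->
    `|z| < 1.

Variable L : nat.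

Definition Rmat : 'M[R]_(n, L * m) :=
  blk_row (fun j : 'I_L => A ^+ (L - 1 - j) *m B).
Definition Omat : 'M[R]_(L * r, n) := blk_col (fun j : 'I_L => C *m A ^+ j).
Definition Hk (k : nat) : 'M[R]_(r, m) := if k is k'.+1 then C *m A ^+ k' *m B else 0.
Definition Hmat : 'M[R]_(L * r, L * m) :=
  blk_mx (fun i j : 'I_L => if (j <= i)%N then Hk (i - j) else 0).

Definition Gamma : 'M[R]_(n, L * m + L * r) :=
  row_mx (Rmat - A ^+ L *m mp_inv Omat *m Hmat) (A ^+ L *m mp_inv Omat).

Definition Smat (k : nat) : 'M[R]_(L * k) :=
  blk_mx (fun i j : 'I_L => if j == i.+1 :> nat then 1%:M else 0).

Definition last_blk (k : nat) : 'M[R]_(L * k, k) :=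
  blk_col (fun i : 'I_L => if i == L.-1 :> nat then 1%:M else 0).

Definition Emat : 'M[R]_(L * m + L * r, r) := col_mx 0 (last_blk r).
Definition Pimat : 'M[R]_(L * m + L * r, m) := col_mx (last_blk m) 0.

Definition Theta : 'M[R]_(L * m + L * r) :=
  block_mx (Smat m) 0 0 (Smat r) + Emat *m C *m Gamma.

Definition Kmat : 'M[R]_(L * m + L * r, (L * m + L * r) * m) :=
  blk_row (fun j : 'I_(L * m + L * r) => Theta ^+ (L * m + L * r - 1 - j) *m Pimat).

(* IOH v(t) = [u(t-L); ...; u(t-1); y(t-L); ...; y(t-1)] *)
Definition ioh (u : nat -> 'cV[R]_m) (y : nat -> 'cV[R]_r) (t : nat)
  : 'cV[R]_(L * m + L * r) :=
  col_mx (mxvec (\matrix_(i < L, j < m) u (t - L + i)%N j 0))^T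
         (mxvec (\matrix_(i < L, j < r) y (t - L + i)%N j 0))^T.

End Defs.

From HB Require Import structures.
From mathcomp Require Import all_boot all_order all_algebra.
From mathcomp Require Import complex.
From mathcomp Require Import zify.
Set Implicit Arguments. Unset Strict Implicit. Unset Printing Implicit Defensive.
Import Order.TTheory GRing.Theory Num.Theory.
Local Open Scope ring_scope.

(* Write the IOH as v(t) = V [u(t-L); ...; u(t-1); x(t-L)] with
   V = [[I, 0], [H_L, O_L]]. Since O_L has full column rank, O_L^+ recovers
   x(t-L) from the output window, hence Gamma v(t) = x(t), and shifting the
   window gives v(t+1) = Theta v(t) + Pi u(t). By Cayley-Hamilton, P is the
   smallest Theta-invariant subspace containing im Pi. On the one hand im V is
   such a subspace, because V z is itself the IOH of a suitably initialised
   trajectory, whose next IOH is Theta V z + Pi a; so P <= im V. On the other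
   hand a minimal realization is controllable, so every IOH V z is reached from
   the zero IOH by some input, and the recursion keeps reachable IOHs in P; so
   im V <= P, and dim P = rank V = Lm + n. *)

Section BlockMatrices.
Variable R : rcfType.

Lemma big_mxvec_index (L q : nat) (f : 'I_(L * q) -> R) :
  \sum_(k < L * q) f k = \sum_(j < L) \sum_(c < q) f (mxvec_index j c).
Proof.
rewrite (reindex _ (curry_mxvec_bij _ _)) /= pair_bigA /=.
by apply: eq_bigr => -[].
Qed.

Lemma blk_rowE L p q (F : 'I_L -> 'M[R]_(p, q)) i j c :
  blk_row F i (mxvec_index j c) = F j i c.
Proof. by rewrite /blk_row mxE mxvecE mxE. Qed.

Lemma blk_colE L p q (F : 'I_L -> 'M[R]_(p, q)) i j c :
  blk_col F (mxvec_index j c) i = F j c i.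
Proof. by rewrite /blk_col mxE blk_rowE mxE. Qed.

Lemma eq_blk_col L q s (F G : 'I_L -> 'M[R]_(q, s)) :
  (forall i, F i = G i) -> blk_col F = blk_col G.
Proof.
move=> eqFG; apply/matrixP => k a; case/mxvec_indexP: k => j c.
by rewrite !blk_colE eqFG.
Qed.

Lemma blk_col0 L q s : blk_col (fun _ : 'I_L => 0 : 'M[R]_(q, s)) = 0.
Proof.
apply/matrixP => k a; case/mxvec_indexP: k => j c.
by rewrite blk_colE !mxE.
Qed.

Lemma blk_colD L q s (F G : 'I_L -> 'M[R]_(q, s)) :
  blk_col F + blk_col G = blk_col (fun i => F i + G i).
Proof.
apply/matrixP => k a; case/mxvec_indexP: k => j c.
by rewrite [LHS]mxE !blk_colE mxE.
Qed.

Lemma mul_blk_row_col L p q s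
    (F : 'I_L -> 'M[R]_(p, q)) (G : 'I_L -> 'M[R]_(q, s)) :
  blk_row F *m blk_col G = \sum_j F j *m G j.
Proof.
apply/matrixP => i a; rewrite !mxE summxE big_mxvec_index; apply: eq_bigr => j _.
by rewrite mxE; apply: eq_bigr => c _; rewrite blk_rowE blk_colE.
Qed.

Lemma mul_blk_col L p q s (F : 'I_L -> 'M[R]_(p, q)) (M : 'M[R]_(q, s)) :
  blk_col F *m M = blk_col (fun i => F i *m M).
Proof.
apply/matrixP => k a; case/mxvec_indexP: k => i c.
by rewrite blk_colE !mxE; apply: eq_bigr => l _; rewrite blk_colE.
Qed.

Lemma mul_mx_blk_row L p q s (M : 'M[R]_(s, p)) (F : 'I_L -> 'M[R]_(p, q)) :
  M *m blk_row F = blk_row (fun j => M *m F j).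
Proof.
apply/matrixP => i k; case/mxvec_indexP: k => j c.
by rewrite blk_rowE !mxE; apply: eq_bigr => l _; rewrite blk_rowE.
Qed.

Lemma mul_blk_mx_col L p q s
    (F : 'I_L -> 'I_L -> 'M[R]_(p, q)) (G : 'I_L -> 'M[R]_(q, s)) :
  blk_mx F *m blk_col G = blk_col (fun i => \sum_j F i j *m G j).
Proof.
rewrite /blk_mx mul_blk_col; apply/matrixP => k a; case/mxvec_indexP: k => i c.
by rewrite !blk_colE mul_blk_row_col.
Qed.

Definition blk_at L q s (X : 'M[R]_(L * q, s)) (j : 'I_L) : 'M[R]_(q, s) :=
  \matrix_(c, a) X (mxvec_index j c) a.

Lemma blk_atK L q s (X : 'M[R]_(L * q, s)) : blk_col (blk_at X) = X.
Proof.
apply/matrixP => k a; case/mxvec_indexP: k => j c.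
by rewrite blk_colE mxE.
Qed.

Definition blk_nat L q (w : 'cV[R]_(L * q)) (s : nat) : 'cV[R]_q :=
  if insub s is Some j then blk_at w j else 0.

Lemma blk_nat_ord L q (w : 'cV[R]_(L * q)) (j : 'I_L) : blk_nat w j = blk_at w j.
Proof. by rewrite /blk_nat valK. Qed.

Lemma shift_blk_col L k (f : nat -> 'cV[R]_k) t : (L <= t)%N ->
  Smat R L k *m blk_col (fun i : 'I_L => f (t - L + i)%N) + last_blk R L k *m f t =
  blk_col (fun i : 'I_L => f (t.+1 - L + i)%N).
Proof.
move=> Lt; rewrite /Smat mul_blk_mx_col /last_blk mul_blk_col blk_colD.
apply: eq_blk_col => i; have ltiL := ltn_ord i.
case: (ltnP i.+1 L) => iL.
- have -> : (i == L.-1 :> nat) = false by apply/eqP; lia.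
  rewrite mul0mx addr0 (bigD1 (Ordinal iL)) //= eqxx mul1mx big1 => [|j ji].
    by rewrite addr0; congr f; lia.
  have -> : (j == i.+1 :> nat) = false.
    by apply: contraNF ji => /eqP ji; apply/eqP/val_inj.
  by rewrite mul0mx.
- have -> : (i == L.-1 :> nat) = true by apply/eqP; lia.
  rewrite mul1mx big1 => [|j _]; last first.
    have -> : (j == i.+1 :> nat) = false by apply/eqP; have := ltn_ord j; lia.
    by rewrite mul0mx.
  by rewrite add0r; congr f; lia.
Qed.

End BlockMatrices.

Section LinearAlgebra.
Variable R : rcfType.

Lemma gram_unitmx p k (F : 'M[R]_(p, k)) : row_full F -> F^T *m F \in unitmx.
Proof.
move=> fullF; rewrite -row_free_unit; apply: inj_row_free => v vFF0.
set w := F *m v^T.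
have w0 : w = 0.
  have : w^T *m w = 0 by rewrite /w trmx_mul trmxK !mulmxA -(mulmxA v) vFF0 !mul0mx.
  move/matrixP => /(_ 0 0); rewrite !mxE => /eqP.
  rewrite psumr_eq0 => [/allP w2_0|i _]; last by rewrite mxE -expr2 sqr_ge0.
  apply/matrixP => i j; rewrite ord1 [RHS]mxE.
  by have := w2_0 i (mem_index_enum _); rewrite mxE mulf_eq0 orbb => /eqP.
have freeFT : row_free F^T by rewrite /row_free mxrank_tr.
apply/eqP; rewrite -(mulmx_free_eq0 _ freeFT).
by rewrite -(trmxK (v *m F^T)) trmx_mul trmxK -/w w0 trmx0.
Qed.

Lemma mulVmx_mp_inv p q (M : 'M[R]_(p, q)) : row_full M -> mp_inv M *m M = 1%:M.
Proof.
move=> fullM; rewrite /mp_inv; set F := col_base M; set G := row_base M.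
have unitF : F^T *m F \in unitmx := gram_unitmx (col_base_full M).
have unitG : G *m G^T \in unitmx.
  rewrite -[G in G *m _]trmxK; apply: gram_unitmx.
  by rewrite /row_full mxrank_tr; exact: row_base_free.
have [D DG] : exists D, D *m G = 1%:M.
  by apply/row_fullP; rewrite /row_full (eqP (row_base_free M)).
rewrite -[X in _ *m X = _](mulmx_base M) -/F -/G; clearbody F G.
rewrite mulmxA -(mulmxA _ F^T F) mulmxKV // -[LHS]mul1mx -DG -!mulmxA.
by rewrite (mulmxA G) (mulmxA (G *m _)) mulmxV // mul1mx.
Qed.

Definition in_colspace p q (M : 'M[R]_(p, q)) (v : 'cV[R]_p) := exists w, v = M *m w.

Lemma colspace_mxrankS p a b (X : 'M[R]_(p, a)) (Y : 'M[R]_(p, b)) :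
  (forall w, in_colspace Y (X *m w)) -> (\rank X <= \rank Y)%N.
Proof.
move=> XY; rewrite -mxrank_tr -(mxrank_tr Y); apply: mxrankS.
apply/row_subP => j; rewrite -tr_col colE.
have [z ->] := XY (delta_mx j 0).
by rewrite trmx_mul submxMl.
Qed.

End LinearAlgebra.

Section Krylov.
Variable R : rcfType.

Lemma expmx_low_powers N (M : 'M[R]_N) k :
  exists c : 'I_N -> R, M ^+ k = \sum_(i < N) c i *: M ^+ i.
Proof.
case: N M => [|N] M; first by exists (fun _ => 0); apply/matrixP => -[].
have deg_le : (degree_mxminpoly M <= N.+1)%N.
  have := dvdp_leq (monic_neq0 (char_poly_monic M)) (mxminpoly_dvd_char M).
  by rewrite size_mxminpoly size_char_poly.
have Mk_low := horner_mx_mem M 'X^k.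
rewrite rmorphXn /= horner_mx_X in Mk_low.
have low_sub : (powers_mx M (degree_mxminpoly M) <= powers_mx M N.+1)%MS.
  apply/row_subP => i; rewrite rowK.
  have -> : mxvec (M ^+ i) = row (widen_ord deg_le i) (powers_mx M N.+1).
    by rewrite rowK.
  exact: row_sub.
case/submxP: (submx_trans Mk_low low_sub) => D MkD.
exists (fun i => D 0 i); apply: (can_inj mxvecK).
rewrite MkD mulmx_sum_row linear_sum; apply: eq_bigr => i _.
by rewrite linearZ rowK.
Qed.

Definition krylov N p (M : 'M[R]_N) (P : 'M[R]_(N, p)) : 'M[R]_(N, N * p) :=
  blk_row (fun j : 'I_N => M ^+ (N - 1 - j) *m P).

Lemma expmx_in_krylov N p (M : 'M[R]_N) (P : 'M[R]_(N, p)) k :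
  exists W : 'M[R]_(N * p, p), M ^+ k *m P = krylov M P *m W.
Proof.
have [c ->] := expmx_low_powers M k.
exists (blk_col (fun j : 'I_N => c (rev_ord j) *: 1%:M)).
rewrite /krylov mul_blk_row_col mulmx_suml (reindex_inj rev_ord_inj) /=.
apply: eq_bigr => j _; rewrite -scalemxAl -scalemxAr mulmx1.
by rewrite -subnDA add1n.
Qed.

Lemma krylov_invariant N p (M : 'M[R]_N) (P : 'M[R]_(N, p)) :
  exists Z, M *m krylov M P = krylov M P *m Z.
Proof.
have : forall j : 'I_N, exists W, M *m (M ^+ (N - 1 - j) *m P) = krylov M P *m W.
  by move=> j; rewrite mulmxA mulmxE -exprS; apply: expmx_in_krylov.
case/fin_all_exists => W MW.
exists (blk_row W); rewrite /krylov !mul_mx_blk_row.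
apply/matrixP => i k; case/mxvec_indexP: k => j c.
by rewrite !blk_rowE MW.
Qed.

(* If rank (krylov A B) = k, factor it as T G with G right invertible: the
   image of T is A-invariant and contains that of B, so (A, B, C) restricted
   to it is a k-dimensional realization with the same Markov parameters. *)
Lemma minimal_krylov_row_free n m r
    (A : 'M[R]_n) (B : 'M[R]_(n, m)) (C : 'M[R]_(r, n)) :
  minimal_realization A B C -> row_free (krylov A B).
Proof.
move=> minABC; set K := krylov A B.
have [G' GG'] := row_freeP (row_base_free K).
have [Z AK] := krylov_invariant A B; rewrite -/K in AK.
have [W BK] := expmx_in_krylov A B 0; rewrite expr0 mul1mx -/K in BK.
have KTG := mulmx_base K.
rewrite /row_free eqn_leq rank_leq_row /=.
move: (\rank K) (col_base K) (row_base K) G' KTG GG' => k T G G' KTG GG'.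
have TK : T = K *m G' by rewrite -KTG -mulmxA GG' mulmx1.
pose A' := G *m Z *m G'.
have AT : A *m T = T *m A' by rewrite {1}TK mulmxA AK -KTG !mulmxA.
have ApowT j : A ^+ j *m T = T *m A' ^+ j.
  elim: j => [|j IHj]; first by rewrite !expr0 mul1mx mulmx1.
  by rewrite exprS -mulmxE -mulmxA IHj mulmxA AT -mulmxA mulmxE -exprS.
apply: (minABC _ A' (G *m W) (C *m T)) => j.
by rewrite -(mulmxA C) -ApowT BK -KTG !mulmxA.
Qed.

End Krylov.

Section Trajectories.
Variable R : rcfType.
Variables (n m r : nat) (A : 'M[R]_n) (B : 'M[R]_(n, m)) (C : 'M[R]_(r, n)).
Variables (u : nat -> 'cV[R]_m) (x : nat -> 'cV[R]_n) (y : nat -> 'cV[R]_r).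
Hypothesis Hx : forall t, x t.+1 = A *m x t + B *m u t.
Hypothesis Hy : forall t, y t = C *m x t.

Lemma state_solution s i :
  x (s + i)%N = A ^+ i *m x s + \sum_(j < i) A ^+ (i - 1 - j) *m B *m u (s + j)%N.
Proof.
elim: i => [|i IHi]; first by rewrite addn0 expr0 mul1mx big_ord0 addr0.
rewrite addnS Hx IHi mulmxDr mulmxA mulmxE -exprS big_ord_recr /= addrA.
rewrite subSS subn0 subnn expr0 mul1mx; congr (_ + _ + _).
rewrite mulmx_sumr; apply: eq_bigr => j _; rewrite !mulmxA mulmxE -exprS.
by rewrite -subnDA add1n -subSn ?subSS // ltn_ord.
Qed.

Variable L : nat.

Lemma output_window s :
  blk_col (fun i : 'I_L => y (s + i)%N) =
  Hmat A B C L *m blk_col (fun i : 'I_L => u (s + i)%N) + Omat A C L *m x s.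
Proof.
rewrite /Hmat mul_blk_mx_col /Omat mul_blk_col blk_colD; apply: eq_blk_col => i.
rewrite Hy state_solution mulmxDr addrC !mulmxA mulmx_sumr; congr (_ + _).
rewrite (big_ord_widen L (fun j => C *m (A ^+ (i - 1 - j) *m B *m u (s + j)%N)));
  last exact: ltnW.
rewrite big_mkcond /=; apply: eq_bigr => j _.
case: (ltngtP j i) => [ji|_|<-]; rewrite ?subnn ?mul0mx //.
have -> : (i - j = (i - 1 - j).+1)%N by lia.
by rewrite /Hk !mulmxA.
Qed.

Lemma state_window s :
  x (s + L)%N = A ^+ L *m x s + Rmat A B L *m blk_col (fun i : 'I_L => u (s + i)%N).
Proof.
by rewrite state_solution /Rmat mul_blk_row_col.
Qed.

Lemma iohE t :
  ioh L u y t = col_mx (blk_col (fun i : 'I_L => u (t - L + i)%N))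
                       (blk_col (fun i : 'I_L => y (t - L + i)%N)).
Proof.
have stackE k (f : 'I_L -> 'cV[R]_k) :
    (mxvec (\matrix_(i < L, j < k) f i j 0))^T = blk_col f.
  apply/matrixP => a b; case/mxvec_indexP: a => i c.
  by rewrite blk_colE mxE ord1 mxvecE mxE.
by rewrite /ioh !stackE.
Qed.

Hypothesis HO : \rank (Omat A C L) = n.

Lemma Gamma_ioh t : (L <= t)%N -> Gamma A B C L *m ioh L u y t = x t.
Proof.
move=> Lt; have fullO : row_full (Omat A C L) by apply/eqP.
rewrite iohE /Gamma; move: (mp_inv _) (mulVmx_mp_inv fullO) => P PO.
rewrite mul_row_col output_window mulmxBl mulmxDr -!mulmxA.
rewrite (mulmxA P (Omat A C L)) PO mul1mx addrA subrK.
by rewrite -{3}(subnK Lt) state_window addrC.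
Qed.

Lemma ioh_step t : (L <= t)%N ->
  ioh L u y t.+1 = Theta A B C L *m ioh L u y t + Pimat R m r L *m u t.
Proof.
move=> Lt; have yt : y t = C *m (Gamma A B C L *m ioh L u y t).
  by rewrite Gamma_ioh // Hy.
rewrite /Theta mulmxDl -!mulmxA -yt !iohE mul_block_col /Emat /Pimat.
rewrite !mul_col_mx !mul0mx !add_col_mx !addr0 !add0r.
by rewrite (shift_blk_col u Lt) (shift_blk_col y Lt).
Qed.

End Trajectories.

Section IOHSpace.
Variable R : rcfType.
Variables (n m r : nat) (A : 'M[R]_n) (B : 'M[R]_(n, m)) (C : 'M[R]_(r, n)).

Fixpoint trajectory (x0 : 'cV[R]_n) (u : nat -> 'cV[R]_m) (t : nat) : 'cV[R]_n :=
  if t is t'.+1 then A *m trajectory x0 u t' + B *m u t' else x0.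

Variable L : nat.

Definition ioh_map : 'M[R]_(L * m + L * r, L * m + n) :=
  block_mx 1%:M 0 (Hmat A B C L) (Omat A C L).

Lemma ioh_mapE (u : nat -> 'cV[R]_m) (x : nat -> 'cV[R]_n) (y : nat -> 'cV[R]_r) :
  (forall t, x t.+1 = A *m x t + B *m u t) -> (forall t, y t = C *m x t) ->
  forall t, ioh L u y t =
    ioh_map *m col_mx (blk_col (fun i : 'I_L => u (t - L + i)%N)) (x (t - L)%N).
Proof.
move=> Hx Hy t.
by rewrite iohE /ioh_map mul_block_col mul1mx mul0mx addr0 (output_window Hx Hy).
Qed.

Hypothesis HO : \rank (Omat A C L) = n.

Lemma rank_ioh_map : \rank ioh_map = (L * m + n)%N.
Proof.
have fullO : row_full (Omat A C L) by apply/eqP.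
move: (mp_inv _) (mulVmx_mp_inv fullO) => P PO.
apply/eqP/row_fullP; exists (block_mx 1%:M 0 (- (P *m Hmat A B C L)) P).
rewrite /ioh_map mulmx_block !mul1mx !mul0mx !mulmx0 !addr0 add0r PO.
by rewrite mulmx1 addNr scalar_mx_block.
Qed.

(* [ioh_map *m z] is the IOH at time L of the trajectory started at the state
   [dsubmx z] and driven by the input window [usubmx z]; continuing it with
   the input [a] gives the next IOH. *)
Lemma ioh_map_step z a :
  in_colspace ioh_map (Theta A B C L *m (ioh_map *m z) + Pimat R m r L *m a).
Proof.
pose u s := if (s < L)%N then blk_nat (usubmx z) s else a.
pose x := trajectory (dsubmx z) u; pose y s := C *m x s.
have Hx t : x t.+1 = A *m x t + B *m u t by [].
have Hy t : y t = C *m x t by [].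
have iohL : ioh L u y L = ioh_map *m z.
  rewrite (ioh_mapE Hx Hy) subnn.
  suff -> : blk_col (fun i : 'I_L => u (0 + i)%N) = usubmx z by rewrite vsubmxK.
  rewrite -[RHS]blk_atK; apply: eq_blk_col => i.
  by rewrite add0n /u ltn_ord blk_nat_ord.
have uL : u L = a by rewrite /u ltnn.
exists (col_mx (blk_col (fun i : 'I_L => u (L.+1 - L + i)%N)) (x (L.+1 - L)%N)).
by rewrite -iohL -uL -(ioh_step Hx Hy HO (leqnn L)) (ioh_mapE Hx Hy).
Qed.

Lemma expTheta_Pi_in_ioh_map k a :
  in_colspace ioh_map (Theta A B C L ^+ k *m Pimat R m r L *m a).
Proof.
elim: k a => [|k IHk] a.
  have [w E] := ioh_map_step 0 a.
  by exists w; rewrite expr0 mul1mx -E !mulmx0 add0r.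
have [z E] := IHk a; have [w E'] := ioh_map_step z 0.
exists w; rewrite exprS -mulmxE -!mulmxA (mulmxA (_ ^+ k)) E -E'.
by rewrite mulmx0 addr0.
Qed.

Lemma Kmat_in_ioh_map w : in_colspace ioh_map (Kmat A B C L *m w).
Proof.
rewrite -[w]blk_atK /Kmat mul_blk_row_col.
have /fin_all_exists [Z KZ] : forall j : 'I_(L * m + L * r), exists z,
    Theta A B C L ^+ (L * m + L * r - 1 - j) *m Pimat R m r L *m blk_at w j =
    ioh_map *m z.
  by move=> j; exact: expTheta_Pi_in_ioh_map.
by exists (\sum_j Z j); rewrite mulmx_sumr; apply: eq_bigr => j _; rewrite KZ.
Qed.

Lemma ioh_in_Kmat (u : nat -> 'cV[R]_m) (x : nat -> 'cV[R]_n) (y : nat -> 'cV[R]_r) :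
  (forall t, x t.+1 = A *m x t + B *m u t) -> (forall t, y t = C *m x t) ->
  in_colspace (Kmat A B C L) (ioh L u y L) ->
  forall t, (L <= t)%N -> in_colspace (Kmat A B C L) (ioh L u y t).
Proof.
move=> Hx Hy inL t Lt; rewrite -(subnKC Lt).
elim: (t - L)%N => [|d [w IHd]]; first by rewrite addn0.
have [Z ThetaK] : exists Z, Theta A B C L *m Kmat A B C L = Kmat A B C L *m Z
  := krylov_invariant _ _.
have [W PiK] : exists W, Theta A B C L ^+ 0 *m Pimat R m r L = Kmat A B C L *m W
  := expmx_in_krylov _ _ 0.
rewrite expr0 mul1mx in PiK.
exists (Z *m w + W *m u (L + d)%N).
by rewrite addnS (ioh_step Hx Hy HO (leq_addr d L)) IHd mulmxDr !mulmxA ThetaK PiK.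
Qed.

Hypothesis Hmin : minimal_realization A B C.

(* Reach the IOH [ioh_map *m z] from the zero IOH: after L zero inputs, steer
   the state from 0 to [dsubmx z] in n steps (possible by controllability),
   then feed the input window [usubmx z]. *)
Lemma ioh_map_in_Kmat z : in_colspace (Kmat A B C L) (ioh_map *m z).
Proof.
have [Kinv KinvK] := row_freeP (minimal_krylov_row_free Hmin).
pose steer := Kinv *m dsubmx z.
have x0E : dsubmx z = krylov A B *m steer by rewrite mulmxA KinvK mul1mx.
pose u s := if (L + n <= s)%N then blk_nat (usubmx z) (s - (L + n))
            else if (L <= s)%N then blk_nat steer (s - L) else 0.
have u_zero s : (s < L)%N -> u s = 0.
  by move=> sL; rewrite /u leqNgt (ltn_addr _ sL) leqNgt sL.
have u_steer j : (j < n)%N -> u (L + j)%N = blk_nat steer j.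
  by move=> jn; rewrite /u leq_add2l leqNgt jn leq_addr addKn.
have u_window s : u (L + n + s)%N = blk_nat (usubmx z) s.
  by rewrite /u leq_addr addKn.
pose x := trajectory 0 u; pose y s := C *m x s.
have Hx t : x t.+1 = A *m x t + B *m u t by [].
have Hy t : y t = C *m x t by [].
have xL : x L = 0.
  rewrite -[L]add0n (state_solution Hx) mulmx0 add0r big1 // => j _.
  by rewrite add0n u_zero ?mulmx0.
have xLn : x (L + n)%N = dsubmx z.
  rewrite (state_solution Hx) xL mulmx0 add0r x0E /krylov -[steer]blk_atK.
  by rewrite mul_blk_row_col; apply: eq_bigr => j _; rewrite u_steer // blk_nat_ord.
have inL : in_colspace (Kmat A B C L) (ioh L u y L).
  exists 0; rewrite mulmx0 (ioh_mapE Hx Hy) subnn.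
  rewrite (@eq_blk_col _ _ _ _ _ (fun=> 0)) ?blk_col0 ?col_mx0 ?mulmx0 // => i.
  by rewrite add0n u_zero.
have := ioh_in_Kmat Hx Hy inL (leq_addl (L + n) L).
rewrite (ioh_mapE Hx Hy) addnK xLn.
suff -> : blk_col (fun i : 'I_L => u (L + n + i)%N) = usubmx z by rewrite vsubmxK.
by rewrite -[RHS]blk_atK; apply: eq_blk_col => i; rewrite u_window blk_nat_ord.
Qed.

End IOHSpace.

Theorem lemma1 (R : rcfType) (n m r : nat)
  (A : 'M[R]_n) (B : 'M[R]_(n, m)) (C : 'M[R]_(r, n))
  (Hmin : minimal_realization A B C) (Hschur : schur_stable A)
  (L : nat) (HO : \rank (Omat A C L) = n)
  (u : nat -> 'cV[R]_m) (x : nat -> 'cV[R]_n) (y : nat -> 'cV[R]_r)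
  (Hx : forall t, x t.+1 = A *m x t + B *m u t)
  (Hy : forall t, y t = C *m x t) :
  (forall t, (L <= t)%N ->
     ioh L u y t.+1 = Theta A B C L *m ioh L u y t + Pimat R m r L *m u t
     /\ y t = C *m Gamma A B C L *m ioh L u y t)
  /\ (forall t, (L <= t)%N ->
        exists w : 'cV[R]_((L * m + L * r) * m), ioh L u y t = Kmat A B C L *m w)
  /\ \rank (Kmat A B C L) = (L * m + n)%N.
Proof.
split; [|split].
- move=> t Lt; split; first exact: ioh_step.
  by rewrite -mulmxA (Gamma_ioh Hx Hy HO Lt) Hy.
- apply: (ioh_in_Kmat HO Hx Hy).
  by rewrite (ioh_mapE L Hx Hy); exact: ioh_map_in_Kmat.
- apply/eqP; rewrite -(rank_ioh_map B HO) eqn_leq.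
  apply/andP; split; apply: colspace_mxrankS => w.
  + exact: Kmat_in_ioh_map.
  + exact: ioh_map_in_Kmat.
Qed.
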